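(* An indexed preorder $\mathcal{A}$ is equivalent (in the locally ordered category of indexed preorders and pseudonatural transformations) to $\mathsf{fam}(A,R)$ for some discrete combinatory object $(A,R)$ if and only if $\mathcal{A}$ has a discrete generic predicate.
   Context: An indexed preorder is a pseudofunctor $\mathcal{A}:\mathsf{Set}^{op}\to\mathsf{Ord}$, with $u^*=\mathcal{A}(u)$. A generic predicate is some $\iota\in\mathcal{A}(C)$ such that every $\varphi\in\mathcal{A}(B)$ is isomorphic to $f^*\iota$ for some $f:B\to C$. A predicate $\delta\in\mathcal{A}(I)$ is discrete if for every surjection $e:K\to J$, function $f:K\to I$ and $\varphi\in\mathcal{A}(J)$ with $e^*\varphi\le f^*\delta$, there exists a $g:J\to I$ with $g\circ e=f$. A uniform preorder is a pair $(A,R)$ with $A$ a set and $R\subseteq P(A\times A)$ such that $\mathrm{id}_A\in R$, $s\circ r\in R$ whenever $r,s\in R$, and $s\in R$ whenever $r\in R$ and $s\subseteq r$; it is a discrete combinatory object (DCO) if all $r\in R$ are single-valued (partial functions). $\mathsf{fam}(A,R)$ is the indexed preorder $I\mapsto(A^I,\le)$ with $\varphi\le\psi$ iff $\{(\varphi i,\psi i)\mid i\in I\}\in R$, reindexing by precomposition. *)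

(* "Set" (the category of sets) is modelled by Rocq types
   (a fixed universe); functions between sets are Rocq functions. *)

(** Since Ord is locally
    preordered, coherence axioms are vacuous; pseudofunctoriality amounts to
    id^* ≅ id and (v∘u)^* ≅ u^* v^* pointwise (≅ = ≤ both ways). *)
Record IndexedPreorder := {
  ip_car : Type -> Type;
  ip_le : forall I : Type, ip_car I -> ip_car I -> Prop;
  ip_refl : forall I (x : ip_car I), ip_le I x x;
  ip_trans : forall I (x y z : ip_car I), ip_le I x y -> ip_le I y z -> ip_le I x z;
  ip_re : forall (I J : Type), (I -> J) -> ip_car J -> ip_car I;
  ip_re_mono : forall I J (u : I -> J) (x y : ip_car J),
      ip_le J x y -> ip_le I (ip_re I J u x) (ip_re I J u y);
  ip_re_id : forall I (x : ip_car I),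
      ip_le I (ip_re I I (fun i => i) x) x /\ ip_le I x (ip_re I I (fun i => i) x);
  ip_re_comp : forall I J K (u : I -> J) (v : J -> K) (x : ip_car K),
      ip_le I (ip_re I K (fun i => v (u i)) x) (ip_re I J u (ip_re J K v x)) /\
      ip_le I (ip_re I J u (ip_re J K v x)) (ip_re I K (fun i => v (u i)) x)
}.

Definition ip_iso (A : IndexedPreorder) (I : Type) (x y : ip_car A I) : Prop :=
  ip_le A I x y /\ ip_le A I y x.

(** Pseudonatural transformation (coherence vacuous in Ord). *)
Record PseudoNat (A B : IndexedPreorder) := {
  pn_map : forall I, ip_car A I -> ip_car B I;
  pn_mono : forall I (x y : ip_car A I), ip_le A I x y -> ip_le B I (pn_map I x) (pn_map I y);
  pn_nat : forall I J (u : I -> J) (x : ip_car A J),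
      ip_iso B I (pn_map I (ip_re A I J u x)) (ip_re B I J u (pn_map J x))
}.
Arguments pn_map {A B}.

Definition ip_equivalent (A B : IndexedPreorder) : Prop :=
  exists (F : PseudoNat A B) (G : PseudoNat B A),
    (forall I (x : ip_car A I), ip_iso A I (pn_map G I (pn_map F I x)) x) /\
    (forall I (y : ip_car B I), ip_iso B I (pn_map F I (pn_map G I y)) y).

Definition generic (A : IndexedPreorder) (C : Type) (iota : ip_car A C) : Prop :=
  forall (B : Type) (phi : ip_car A B),
    exists f : B -> C, ip_iso A B phi (ip_re A B C f iota).

Definition discrete (A : IndexedPreorder) (I : Type) (delta : ip_car A I) : Prop :=
  forall (K J : Type) (e : K -> J) (f : K -> I) (phi : ip_car A J),
    (forall j : J, exists k : K, e k = j) ->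
    ip_le A K (ip_re A K J e phi) (ip_re A K I f delta) ->
    exists g : J -> I, forall k : K, g (e k) = f k.

Definition has_discrete_generic (A : IndexedPreorder) : Prop :=
  exists (C : Type) (iota : ip_car A C), generic A C iota /\ discrete A C iota.

Definition rel_sub {A : Type} (s r : A -> A -> Prop) : Prop :=
  forall a b, s a b -> r a b.
Definition rel_comp {A : Type} (s r : A -> A -> Prop) : A -> A -> Prop :=
  fun a c => exists b, r a b /\ s b c.   (* s ∘ r *)

Definition uniform_preorder (A : Type) (R : (A -> A -> Prop) -> Prop) : Prop :=
  R (fun a b => a = b) /\
  (forall r s, R r -> R s -> R (rel_comp s r)) /\
  (forall r s, R r -> rel_sub s r -> R s).

Definition DCO (A : Type) (R : (A -> A -> Prop) -> Prop) : Prop :=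
  uniform_preorder A R /\
  (forall r, R r -> forall a b c, r a b -> r a c -> b = c).

Definition graph_rel {I A : Type} (phi psi : I -> A) : A -> A -> Prop :=
  fun a b => exists i, phi i = a /\ psi i = b.

Definition fam_le (A : Type) (R : (A -> A -> Prop) -> Prop) (I : Type)
  (phi psi : I -> A) : Prop := R (graph_rel phi psi).

Definition fam (A : Type) (R : (A -> A -> Prop) -> Prop)
  (H : uniform_preorder A R) : IndexedPreorder.
Proof.
  destruct H as [Hid [Hcomp Hsub]].
  refine {| ip_car := fun I => I -> A;
            ip_le := fam_le A R;
            ip_re := fun I J u phi => fun i => phi (u i) |}.
  - intros I x. apply (Hsub _ _ Hid). intros a b [i [<- <-]]. reflexivity.
  - intros I x y z Hxy Hyz. apply (Hsub _ _ (Hcomp _ _ Hxy Hyz)).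
    intros a c [i [<- <-]]. exists (y i). split; exists i; auto.
  - intros I J u x y Hxy. apply (Hsub _ _ Hxy).
    intros a b [i [<- <-]]. exists (u i); auto.
  - intros I x; split; apply (Hsub _ _ Hid); intros a b [i [<- <-]]; reflexivity.
  - intros I J K u v x; split; apply (Hsub _ _ Hid); intros a b [i [<- <-]]; reflexivity.
Defined.

(* A DCO (X, R) makes the identity of X a discrete generic predicate of
   fam(X, R), and having a discrete generic predicate is invariant under
   equivalence.  Conversely, for a discrete generic predicate ι over C, let R
   consist of the relations contained in some {(φ b, ψ b) | b ∈ B} with
   φ^*ι ≤ ψ^*ι.  Pullbacks make R closed under composition, discreteness
   makes ψ factor through φ (so R is single-valued), and by genericity
   f ↦ f^*ι is an equivalence fam(C, R) ≃ A, since it is an order embedding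
   on each fibre. *)

From Stdlib Require Import ClassicalEpsilon FunctionalExtensionality ProofIrrelevance.

Section IsoFacts.
Variable A : IndexedPreorder.

Lemma ip_iso_refl I (x : ip_car A I) : ip_iso A I x x.
Proof. split; apply ip_refl. Qed.

Lemma ip_iso_sym I (x y : ip_car A I) : ip_iso A I x y -> ip_iso A I y x.
Proof. intros [Hxy Hyx]; split; assumption. Qed.

Lemma ip_iso_trans I (x y z : ip_car A I) :
  ip_iso A I x y -> ip_iso A I y z -> ip_iso A I x z.
Proof. intros [Hxy Hyx] [Hyz Hzy]; split; eapply ip_trans; eauto. Qed.

Lemma ip_re_iso I J (u : I -> J) (x y : ip_car A J) :
  ip_iso A J x y -> ip_iso A I (ip_re A I J u x) (ip_re A I J u y).
Proof. intros [Hxy Hyx]; split; apply ip_re_mono; assumption. Qed.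

Lemma ip_re_le_precomp I B C (h : I -> B) (p q : B -> C) (x : ip_car A C) :
  ip_le A B (ip_re A B C p x) (ip_re A B C q x) ->
  ip_le A I (ip_re A I C (fun i => p (h i)) x) (ip_re A I C (fun i => q (h i)) x).
Proof.
  intros Hpq.
  eapply ip_trans; [apply (ip_re_comp A I B C h p x) |].
  eapply ip_trans; [apply (ip_re_mono A I B h _ _ Hpq) |].
  apply (ip_re_comp A I B C h q x).
Qed.

End IsoFacts.

Lemma pn_map_iso A B (F : PseudoNat A B) I (x y : ip_car A I) :
  ip_iso A I x y -> ip_iso B I (pn_map F I x) (pn_map F I y).
Proof. intros [Hxy Hyx]; split; apply pn_mono; assumption. Qed.

Section Transport.
Variables A B : IndexedPreorder.
Variable F : PseudoNat A B.
Variable G : PseudoNat B A.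

Lemma generic_transport C (iota : ip_car B C) :
  (forall I (x : ip_car A I), ip_iso A I (pn_map G I (pn_map F I x)) x) ->
  generic B C iota -> generic A C (pn_map G C iota).
Proof.
  intros HGF Hgen I phi.
  destruct (Hgen I (pn_map F I phi)) as [f Hf].
  exists f.
  eapply ip_iso_trans; [apply ip_iso_sym, HGF |].
  eapply ip_iso_trans; [apply pn_map_iso, Hf |].
  apply pn_nat.
Qed.

Lemma discrete_transport C (iota : ip_car B C) :
  (forall I (y : ip_car B I), ip_iso B I (pn_map F I (pn_map G I y)) y) ->
  discrete B C iota -> discrete A C (pn_map G C iota).
Proof.
  intros HFG Hdisc K J e f phi He Hle.
  apply (Hdisc K J e f (pn_map F J phi) He).
  eapply ip_trans; [apply (pn_nat _ _ F K J e phi) |].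
  eapply ip_trans; [apply (pn_mono _ _ F _ _ _ Hle) |].
  eapply ip_trans; [apply (pn_nat _ _ F K C f) |].
  apply ip_re_mono, HFG.
Qed.

End Transport.

Lemma has_discrete_generic_equivalent A B :
  ip_equivalent A B -> has_discrete_generic B -> has_discrete_generic A.
Proof.
  intros [F [G [HGF HFG]]] [C [iota [Hgen Hdisc]]].
  exists C, (pn_map G C iota).
  split; [apply (generic_transport A B F G) | apply (discrete_transport A B F G)];
    assumption.
Qed.

Section FamIdentity.
Variables (X : Type) (R : (X -> X -> Prop) -> Prop).
Hypothesis R_id : R (fun a b => a = b).
Hypothesis R_comp : forall r s, R r -> R s -> R (rel_comp s r).
Hypothesis R_sub : forall r s, R r -> rel_sub s r -> R s.

(* fam X R H only computes when H is a constructor, so the uniform-preorder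
   axioms are taken separately here. *)
Let famR := fam X R (conj R_id (conj R_comp R_sub)).

Lemma fam_id_generic : generic famR X (fun x => x).
Proof. intros I phi; exists phi; apply ip_iso_refl. Qed.

Lemma fam_id_discrete :
  (forall r, R r -> forall a b c, r a b -> r a c -> b = c) ->
  discrete famR X (fun x => x).
Proof.
  intros Hsv K J e f phi He Hle.
  change (R (graph_rel (fun k => phi (e k)) f)) in Hle.
  destruct (choice (fun j k => e k = j) He) as [s Hs].
  exists (fun j => f (s j)); intros k.
  apply (Hsv _ Hle (phi (e k))).
  - exists (s (e k)); rewrite Hs; split; reflexivity.
  - exists k; split; reflexivity.
Qed.

End FamIdentity.

Lemma fam_has_discrete_generic X R (H : uniform_preorder X R) :
  (forall r, R r -> forall a b c, r a b -> r a c -> b = c) ->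
  has_discrete_generic (fam X R H).
Proof.
  destruct H as [R_id [R_comp R_sub]]; intros Hsv.
  exists X, (fun x : X => x).
  split; [apply fam_id_generic | apply fam_id_discrete, Hsv].
Qed.

Section GenericRel.
Variables (A : IndexedPreorder) (C : Type) (iota : ip_car A C).

Definition generic_rel (r : C -> C -> Prop) : Prop :=
  exists (B : Type) (phi psi : B -> C),
    ip_le A B (ip_re A B C phi iota) (ip_re A B C psi iota) /\
    rel_sub r (graph_rel phi psi).

Lemma generic_rel_uniform : uniform_preorder C generic_rel.
Proof.
  split; [| split].
  - exists C, (fun c => c), (fun c => c).
    split; [apply ip_refl |].
    intros a b <-; exists a; split; reflexivity.
  - intros r s [B1 [f1 [g1 [Hle1 Hr]]]] [B2 [f2 [g2 [Hle2 Hs]]]].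
    pose (P := {p : B1 * B2 | g1 (fst p) = f2 (snd p)}).
    pose (q1 := fun p : P => fst (proj1_sig p)).
    pose (q2 := fun p : P => snd (proj1_sig p)).
    exists P, (fun p => f1 (q1 p)), (fun p => g2 (q2 p)).
    split.
    + assert (Hsquare : (fun p => g1 (q1 p)) = (fun p => f2 (q2 p))).
      { extensionality p; exact (proj2_sig p). }
      eapply ip_trans; [apply (ip_re_le_precomp A P B1 C q1 f1 g1 iota Hle1) |].
      rewrite Hsquare.
      apply (ip_re_le_precomp A P B2 C q2 f2 g2 iota Hle2).
    + intros a c [b [Hab Hbc]].
      destruct (Hr _ _ Hab) as [b1 [<- <-]].
      destruct (Hs _ _ Hbc) as [b2 [Hb2 <-]].
      exists (exist _ (b1, b2) (eq_sym Hb2)); split; reflexivity.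
  - intros r s [B [phi [psi [Hle Hr]]]] Hsr.
    exists B, phi, psi; split; [assumption |].
    intros a b Hab; apply Hr, Hsr, Hab.
Qed.

Lemma discrete_le_factors :
  discrete A C iota ->
  forall B (phi psi : B -> C),
    ip_le A B (ip_re A B C phi iota) (ip_re A B C psi iota) ->
    forall b b', phi b = phi b' -> psi b = psi b'.
Proof.
  intros Hdisc B phi psi Hle b b' Hb.
  pose (J := {c : C | exists b, phi b = c}).
  pose (e := fun b => exist (fun c => exists b, phi b = c) (phi b) (ex_intro _ b eq_refl) : J).
  assert (He : forall j : J, exists b, e b = j).
  { intros [c [b0 <-]]; exists b0; reflexivity. }
  assert (Hle' : ip_le A B (ip_re A B J e (ip_re A J C (@proj1_sig _ _) iota))
                           (ip_re A B C psi iota)).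
  { eapply ip_trans; [apply (ip_re_comp A B J C e) | exact Hle]. }
  destruct (Hdisc B J e psi _ He Hle') as [g Hg].
  rewrite <- !Hg.
  f_equal; apply subset_eq_compat; exact Hb.
Qed.

Lemma generic_rel_single_valued :
  discrete A C iota ->
  forall r, generic_rel r -> forall a b c, r a b -> r a c -> b = c.
Proof.
  intros Hdisc r [B [phi [psi [Hle Hr]]]] a b c Hab Hac.
  destruct (Hr _ _ Hab) as [i [Hi <-]].
  destruct (Hr _ _ Hac) as [i' [Hi' <-]].
  apply (discrete_le_factors Hdisc B phi psi Hle).
  congruence.
Qed.

Lemma fam_le_generic_rel I (phi psi : I -> C) :
  fam_le C generic_rel I phi psi <->
  ip_le A I (ip_re A I C phi iota) (ip_re A I C psi iota).
Proof.
  split.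
  - intros [B [p [q [Hle Hsub]]]].
    assert (Hlift : forall i, exists b, p b = phi i /\ q b = psi i).
    { intros i; apply Hsub; exists i; split; reflexivity. }
    destruct (choice _ Hlift) as [h Hh].
    replace phi with (fun i => p (h i)) by (extensionality i; apply Hh).
    replace psi with (fun i => q (h i)) by (extensionality i; apply Hh).
    apply ip_re_le_precomp, Hle.
  - intros Hle.
    exists I, phi, psi; split; [assumption |].
    intros a b Hab; exact Hab.
Qed.

Lemma fam_iso_generic_rel I (phi psi : I -> C) :
  ip_iso A I (ip_re A I C phi iota) (ip_re A I C psi iota) ->
  fam_le C generic_rel I phi psi /\ fam_le C generic_rel I psi phi.
Proof. intros [Hle Hge]; split; apply fam_le_generic_rel; assumption. Qed.

Hypothesis Hgen : generic A C iota.

Definition classify I (phi : ip_car A I) : I -> C :=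
  proj1_sig (constructive_indefinite_description _ (Hgen I phi)).

Lemma classify_spec I (phi : ip_car A I) :
  ip_iso A I phi (ip_re A I C (classify I phi) iota).
Proof. exact (proj2_sig (constructive_indefinite_description _ (Hgen I phi))). Qed.

Lemma classify_re I J (u : I -> J) (x : ip_car A J) :
  ip_iso A I (ip_re A I C (classify I (ip_re A I J u x)) iota)
             (ip_re A I C (fun i => classify J x (u i)) iota).
Proof.
  eapply ip_iso_trans; [apply ip_iso_sym, classify_spec |].
  eapply ip_iso_trans; [apply ip_re_iso, classify_spec |].
  apply ip_iso_sym, ip_re_comp.
Qed.

Lemma generic_equivalent_fam (H : uniform_preorder C generic_rel) :
  ip_equivalent A (fam C generic_rel H).
Proof.
  destruct H as [R_id [R_comp R_sub]].
  pose (P := fam C generic_rel (conj R_id (conj R_comp R_sub))).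
  assert (classify_mono : forall I (x y : ip_car A I),
             ip_le A I x y -> ip_le P I (classify I x) (classify I y)).
  { intros I x y Hxy; apply fam_le_generic_rel.
    eapply ip_trans; [apply classify_spec |].
    eapply ip_trans; [exact Hxy | apply classify_spec]. }
  assert (restrict_mono : forall I (f g : ip_car P I),
             ip_le P I f g -> ip_le A I (ip_re A I C f iota) (ip_re A I C g iota)).
  { intros I f g; apply fam_le_generic_rel. }
  exists {| pn_map := classify : forall I, ip_car A I -> ip_car P I;
            pn_mono := classify_mono;
            pn_nat := fun I J u x => fam_iso_generic_rel I _ _ (classify_re I J u x) |}.
  exists {| pn_map := (fun I f => ip_re A I C f iota) : forall I, ip_car P I -> ip_car A I;
            pn_mono := restrict_mono;
            pn_nat := fun I J u f => ip_re_comp A I J C u f iota |}.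
  split; simpl.
  - intros I x; apply ip_iso_sym, classify_spec.
  - intros I f; apply fam_iso_generic_rel, ip_iso_sym, classify_spec.
Qed.

End GenericRel.

Theorem corollary8p4 (A : IndexedPreorder) :
  (exists (X : Type) (R : (X -> X -> Prop) -> Prop) (D : DCO X R),
      ip_equivalent A (fam X R (proj1 D)))
  <-> has_discrete_generic A.
Proof.
  split.
  - intros [X [R [D Hequiv]]].
    apply (has_discrete_generic_equivalent _ _ Hequiv).
    apply fam_has_discrete_generic, (proj2 D).
  - intros [C [iota [Hgen Hdisc]]].
    exists C, (generic_rel A C iota),
      (conj (generic_rel_uniform A C iota) (generic_rel_single_valued A C iota Hdisc)).
    apply generic_equivalent_fam, Hgen.
Qed.
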